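(* Let $K$ be a polygonal element and suppose $\widetilde V(K)\subset V(K)$, $\widetilde{\bm W}(K)\subset\bm W(K)$ satisfy: $\bm n\times V(K)\subset\bm M(\partial K)$ and $\bm n\times\bm W(K)\times\bm n\subset\bm M(\partial K)$; $\nabla\times V(K)\subset\widetilde{\bm W}(K)$ and $\nabla\times\bm W(K)\subset\widetilde V(K)$; and for every $\bm\mu\in\bm M(\partial K)$, $\bm n\times\bm\mu=0$ implies $\bm\mu=\bm0$. Then $\mathrm{tr}:\widetilde V^\perp(K)\times\widetilde{\bm W}^\perp(K)\to\bm M(\partial K)$ is an isomorphism if and only if: $\gamma$ is injective on $\widetilde V^\perp(K)$, $\gamma$ is injective on $\widetilde{\bm W}^\perp(K)$, and $\gamma\widetilde V^\perp(K)\oplus\gamma\widetilde{\bm W}^\perp(K)=\bm M(\partial K)$.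
   Context: Conventions in 2D: $\nabla\times\bm v=-\partial_yv_1+\partial_xv_2$, $\nabla\times p=(\partial_yp,-\partial_xp)^T$, $\bm n\times\bm v=-n_2v_1+n_1v_2$, $\bm n\times p=(n_2p,-n_1p)^T$, $\bm n\times\bm w\times\bm n:=\bm w-(\bm w\cdot\bm n)\bm n$, with $\bm n$ the unit outward normal of $K$. $V(K)\subset H^1(K)$, $\bm W(K)\subset\bm H(\mathrm{curl};K)$ are finite-dimensional polynomial spaces and $\bm M(\partial K)$ a finite-dimensional space of vector functions on $\partial K$. $\perp$ denotes $L^2(K)$-orthogonal complement in $V(K)$, resp. $\bm W(K)$. $\mathrm{tr}(v,\bm w):=(\bm n\times v+\bm n\times\bm w\times\bm n)|_{\partial K}$. $\gamma$ denotes the map $v\mapsto\bm n\times v|_{\partial K}$ on scalar functions and $\bm w\mapsto\bm n\times\bm w\times\bm n|_{\partial K}$ on vector functions; $\gamma\widetilde V^\perp(K)$, $\gamma\widetilde{\bm W}^\perp(K)$ are the images. *)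

From HB Require Import structures.
From mathcomp Require Import all_boot all_order all_algebra.
From mathcomp Require Import all_classical all_reals all_analysis.
Set Implicit Arguments. Unset Strict Implicit. Unset Printing Implicit Defensive.
Import Order.TTheory GRing.Theory Num.Theory.
Local Open Scope classical_set_scope.
Local Open Scope ring_scope.

Section Defs.
Variable R : realType.
Local Notation P2 := (R * R)%type.

Definition lin_subspace (D : Type) (U : lmodType R) (S : set (D -> U)) :=
  S (fun=> 0) /\ forall (a : R) f g, S f -> S g -> S (fun z => a *: f z + g z).

Definition fin_dim (D : Type) (U : lmodType R) (S : set (D -> U)) :=
  exists s : seq (D -> U), forall f,
    S f <-> exists c : 'I_(size s) -> R,
      f = fun z => \sum_(j < size s) c j *: (nth (fun=> 0) s j) z.

Definition poly_fun (f : P2 -> R) :=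
  exists p : {poly {poly R}}, forall x y, f (x, y) = (p.[y%:P]).[x].
Definition vpoly_fun (w : P2 -> P2) :=
  poly_fun (fun z => (w z).1) /\ poly_fun (fun z => (w z).2).

Definition dx (f : P2 -> R) (z : P2) : R := derive1 (fun s => f (s, z.2)) z.1.
Definition dy (f : P2 -> R) (z : P2) : R := derive1 (fun s => f (z.1, s)) z.2.
Definition curl_v (w : P2 -> P2) (z : P2) : R :=
  - dy (fun q => (w q).1) z + dx (fun q => (w q).2) z.
Definition curl_s (p : P2 -> R) (z : P2) : P2 := (dy p z, - dx p z).

Definition nx_s (n : P2) (v : R) : P2 := (n.2 * v, - (n.1 * v)).
Definition nx_v (n : P2) (m : P2) : R := - (n.2 * m.1) + n.1 * m.2.
Definition nxwxn (n : P2) (w : P2) : P2 :=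
  let d := w.1 * n.1 + w.2 * n.2 in (w.1 - d * n.1, w.2 - d * n.2).
Definition dot2 (a b : P2) : R := a.1 * b.1 + a.2 * b.2.

(** polygons, given by the cyclic list of their N vertices *)
Variable N : nat.
Implicit Types vtx : 'I_N -> P2.

Definition edge_pt vtx (i : 'I_N) (t : R) : P2 :=
  ((vtx i).1 + t * ((vtx (ordS i)).1 - (vtx i).1),
   (vtx i).2 + t * ((vtx (ordS i)).2 - (vtx i).2)).

Definition simple_polygon vtx :=
  (3 <= N)%N /\
  forall (i j : 'I_N) (s t : R), i != j -> 0 <= s <= 1 -> 0 <= t <= 1 ->
    edge_pt vtx i s = edge_pt vtx j t ->
    (j = ordS i /\ s = 1 /\ t = 0) \/ (i = ordS j /\ s = 0 /\ t = 1).

(* counterclockwise orientation: positive signed (shoelace) area *)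
Definition ccw vtx :=
  0 < \sum_(i < N) ((vtx i).1 * (vtx (ordS i)).2 - (vtx (ordS i)).1 * (vtx i).2).

Definition polygonal_element vtx := simple_polygon vtx /\ ccw vtx.

Definition on_boundary vtx (z : P2) :=
  exists (i : 'I_N) (t : R), 0 <= t <= 1 /\ z = edge_pt vtx i t.

(* horizontal ray from z to the right crosses edge i (ray-casting rule) *)
Definition crosses vtx (z : P2) (i : 'I_N) : bool :=
  let a := vtx i in let b := vtx (ordS i) in
  ((z.2 < a.2) != (z.2 < b.2)) &&
  (z.1 < a.1 + (z.2 - a.2) * (b.1 - a.1) / (b.2 - a.2)).

(* the (open) polygonal region K enclosed by the polygon *)
Definition region vtx : set P2 :=
  [set z | ~ on_boundary vtx z /\ odd #|[set i | crosses vtx z i]|].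

(* unit outward normal on edge i (counterclockwise orientation) *)
Definition normal vtx (i : 'I_N) : P2 :=
  let e1 := (vtx (ordS i)).1 - (vtx i).1 in
  let e2 := (vtx (ordS i)).2 - (vtx i).2 in
  let l := Num.sqrt (e1 ^+ 2 + e2 ^+ 2) in (e2 / l, - e1 / l).

(** functions on the boundary: a value for each edge i and each interior
    parameter t in (0,1) of that edge (vertices have measure zero on dK) *)
Definition bparam := {t : R | 0 < t < 1}.
Definition bpoint vtx (p : 'I_N * bparam) : P2 := edge_pt vtx p.1 (sval p.2).
Definition bnormal vtx (p : 'I_N * bparam) : P2 := normal vtx p.1.

Definition gamma_s vtx (v : P2 -> R) : 'I_N * bparam -> P2 :=
  fun p => nx_s (bnormal vtx p) (v (bpoint vtx p)).
Definition gamma_v vtx (w : P2 -> P2) : 'I_N * bparam -> P2 :=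
  fun p => nxwxn (bnormal vtx p) (w (bpoint vtx p)).
Definition trace vtx (v : P2 -> R) (w : P2 -> P2) : 'I_N * bparam -> P2 :=
  fun p => gamma_s vtx v p + gamma_v vtx w p.

Definition L2s vtx (u v : P2 -> R) : \bar R :=
  (\int[(@lebesgue_measure R \x @lebesgue_measure R)%E]_(z in region vtx)
     (u z * v z)%:E)%E.
Definition L2v vtx (u v : P2 -> P2) : \bar R :=
  (\int[(@lebesgue_measure R \x @lebesgue_measure R)%E]_(z in region vtx)
     (dot2 (u z) (v z))%:E)%E.

Definition perp_s vtx (V Vt : set (P2 -> R)) : set (P2 -> R) :=
  [set v | V v /\ forall u, Vt u -> L2s vtx v u = 0%E].
Definition perp_v vtx (W Wt : set (P2 -> P2)) : set (P2 -> P2) :=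
  [set w | W w /\ forall u, Wt u -> L2v vtx w u = 0%E].

End Defs.

(* Since tr(v, w) = γv + γw with γ additive, the statement is linear algebra
   about the sum of two additive maps on the additive groups Ṽ^⊥ and W̃^⊥: the
   sum is injective iff both maps are injective and their images meet only in
   0, and it is onto M(∂K) iff the two images add up to M(∂K).  The one
   analytic point is that the L²(K)-orthogonal complements are closed under
   subtraction.  This holds because K is measurable (its boundary is a finite
   union of segments, its interior a parity condition on ray crossings),
   polynomials are measurable, and a measurable function with a finite
   integral is integrable, so the integrals defining the L²(K) products are
   additive. *)

From HB Require Import structures.
From mathcomp Require Import all_boot all_order all_algebra.
From mathcomp Require Import all_classical all_reals all_analysis.
From mathcomp Require Import measurable_realfun ring lra.
Import Order.TTheory GRing.Theory Num.Theory.
Local Open Scope classical_set_scope.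
Local Open Scope ring_scope.
Set Implicit Arguments. Unset Strict Implicit. Unset Printing Implicit Defensive.

Section SumMap.
Variables (U1 U2 G : zmodType) (A : set U1) (B : set U2) (M : set G).
Variables (f : U1 -> G) (g : U2 -> G).
Hypotheses (A0 : A 0) (B0 : B 0).
Hypotheses (A_closed : forall x y, A x -> A y -> A (x - y)).
Hypotheses (B_closed : forall x y, B x -> B y -> B (x - y)).
Hypotheses (fB : {morph f : x y / x - y}) (gB : {morph g : x y / x - y}).

Let f0 : f 0 = 0. Proof. by rewrite -(subrr 0) fB subrr. Qed.
Let g0 : g 0 = 0. Proof. by rewrite -(subrr 0) gB subrr. Qed.

Lemma sum_map_injective_iff :
  (forall a b a' b', A a -> B b -> A a' -> B b' ->
     f a + g b = f a' + g b' -> a = a' /\ b = b') <->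
  [/\ forall a a', A a -> A a' -> f a = f a' -> a = a',
      forall b b', B b -> B b' -> g b = g b' -> b = b' &
      forall a b, A a -> B b -> f a = g b -> f a = 0].
Proof.
split=> [inj | [injf injg direct] a b a' b' Aa Bb Aa' Bb' e].
  split=> [a a' Aa Aa' e | b b' Bb Bb' e | a b Aa Bb e].
  - by have [] := inj a 0 a' 0 Aa B0 Aa' B0; rewrite ?e.
  - by have [] := inj 0 b 0 b' A0 Bb A0 Bb'; rewrite ?e.
  - have e' : f a + g 0 = f 0 + g b by rewrite f0 g0 e addr0 add0r.
    by have [-> _] := inj _ _ _ _ Aa B0 A0 Bb e'.
have fg : f (a - a') = g (b' - b).
  by rewrite fB gB; apply/eqP; rewrite subr_eq addrAC (addrC (g b')) -e addrK.
have /eqP : f (a - a') = 0 := direct _ _ (A_closed Aa Aa') (B_closed Bb' Bb) fg.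
rewrite fB subr_eq0 => /eqP/(injf _ _ Aa Aa') aa'; split=> //.
by apply: injg Bb Bb' _; apply: (addrI (f a)); rewrite e aa'.
Qed.

Hypotheses (fM : forall a, A a -> M (f a)) (gM : forall b, B b -> M (g b)).
Hypothesis MD : forall m m', M m -> M m' -> M (m + m').

Lemma sum_map_onto_iff :
  (forall m, M m -> exists a b, A a /\ B b /\ f a + g b = m) <->
  (forall m, M m <-> exists a b, A a /\ B b /\ m = f a + g b).
Proof.
split=> [onto m | onto m /onto [a [b [Aa [Bb ->]]]]]; last by exists a, b.
split=> [/onto [a [b [Aa [Bb <-]]]] | [a [b [Aa [Bb ->]]]]]; first by exists a, b.
exact: MD (fM Aa) (gM Bb).
Qed.

Lemma sum_map_bijective_iff :
  (forall a b a' b', A a -> B b -> A a' -> B b' ->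
     f a + g b = f a' + g b' -> a = a' /\ b = b') /\
  (forall m, M m -> exists a b, A a /\ B b /\ f a + g b = m) <->
  (forall a a', A a -> A a' -> f a = f a' -> a = a') /\
  (forall b b', B b -> B b' -> g b = g b' -> b = b') /\
  (forall a b, A a -> B b -> f a = g b -> f a = 0) /\
  (forall m, M m <-> exists a b, A a /\ B b /\ m = f a + g b).
Proof.
rewrite sum_map_injective_iff sum_map_onto_iff.
by split=> [[[? ? ?] ?] | [? [? [? ?]]]].
Qed.

End SumMap.

Section Integrals.
Local Open Scope ereal_scope.
Context d (T : measurableType d) (R : realType) (mu : {measure set T -> \bar R}).
Variable D : set T.
Hypothesis mD : measurable D.

Lemma integrable_fin_num_integral (f : T -> \bar R) : measurable_fun D f ->
  \int[mu]_(x in D) f x \is a fin_num -> mu.-integrable D f.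
Proof.
move=> mf; rewrite integralE fin_numB => /andP[fpos fneg].
apply/integrableP; split=> //; rewrite (_ : (fun x => _) = f^\+ \+ f^\-).
  rewrite ge0_integralD//.
  - by rewrite ltey_eq fin_numD fpos fneg.
  - exact: measurable_funepos.
  - exact: measurable_funeneg.
by rewrite -fune_abse.
Qed.

Lemma integral_subr_eq0 (f g : T -> R) :
  measurable_fun D f -> measurable_fun D g ->
  \int[mu]_(x in D) (f x)%:E = 0 -> \int[mu]_(x in D) (g x)%:E = 0 ->
  \int[mu]_(x in D) (f x - g x)%R%:E = 0.
Proof.
move=> mf mg f0 g0; have intE h : measurable_fun D h ->
    \int[mu]_(x in D) (h x)%:E = 0 -> mu.-integrable D (EFin \o h).
  move=> mh h0; apply: integrable_fin_num_integral; last by rewrite h0.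
  exact/measurable_EFinP.
by rewrite integralB_EFin ?f0 ?g0 ?sube0 //; apply: intE.
Qed.

End Integrals.

Section BoolMeasurable.
Context d (T : measurableType d).

Lemma measurable_fun_bool_op (op : bool -> bool -> bool) (f g : T -> bool) :
  measurable_fun setT f -> measurable_fun setT g ->
  measurable_fun setT (fun x => op (f x) (g x)).
Proof.
move=> mf mg; have mop b : measurable_fun setT (fun x => op b (g x)).
  rewrite (_ : (fun x => _) = fun x => if g x then op b true else op b false).
    exact: measurable_fun_ifT.
  by apply/funext => x; case: (g x).
rewrite (_ : (fun x => _) = fun x => if f x then op true (g x) else op false (g x)).
  exact: measurable_fun_ifT.
by apply/funext => x; case: (f x).
Qed.

Lemma measurable_fun_bigop (op : bool -> bool -> bool) (idx : bool) (I : Type)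
    (s : seq I) (F : I -> T -> bool) :
  (forall i, measurable_fun setT (F i)) ->
  measurable_fun setT (fun x => \big[op/idx]_(i <- s) F i x).
Proof.
move=> mF; elim: s => [|i s IH].
  under eq_fun do rewrite big_nil; exact: measurable_cst.
under eq_fun do rewrite big_cons; exact: measurable_fun_bool_op.
Qed.

End BoolMeasurable.

Section PolyMeasurable.
Variable R : realType.
Local Notation P2 := (R * R)%type.

Lemma measurable_poly_fun (f : P2 -> R) : poly_fun f -> measurable_fun setT f.
Proof.
move=> [p fE]; rewrite (_ : f = fun z => (p.[z.2%:P]).[z.1]); last first.
  by apply/funext => -[x y]; rewrite fE.
elim/poly_ind: p {fE} => [|q c IH].
  under eq_fun do rewrite !horner0; exact: measurable_cst.
under eq_fun do rewrite hornerMXaddC hornerD hornerM hornerC.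
apply: measurable_funD; first exact: measurable_funM.
exact: measurableT_comp (continuous_measurable_fun (@continuous_horner R c))
  measurable_fst.
Qed.

Lemma measurable_dot2 (w u : P2 -> P2) : vpoly_fun w -> vpoly_fun u ->
  measurable_fun setT (fun z => dot2 (w z) (u z)).
Proof.
by move=> [/measurable_poly_fun mw1 /measurable_poly_fun mw2]
  [/measurable_poly_fun mu1 /measurable_poly_fun mu2]; apply: measurable_funD;
  apply: measurable_funM.
Qed.

End PolyMeasurable.

Section Segment.
Variable R : realType.
Local Notation P2 := (R * R)%type.

(* [z - a] is parallel to [b - a], with projection parameter in [0, 1]; a
   degenerate segment is a single point *)
Definition on_segment (a b z : P2) : bool :=
  let e1 := b.1 - a.1 in let e2 := b.2 - a.2 in
  let u1 := z.1 - a.1 in let u2 := z.2 - a.2 in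
  if (e1 == 0) && (e2 == 0) then (u1 == 0) && (u2 == 0)
  else [&& u1 * e2 - u2 * e1 == 0, 0 <= u1 * e1 + u2 * e2
         & u1 * e1 + u2 * e2 <= e1 ^+ 2 + e2 ^+ 2].

Lemma parallel_proj (e1 e2 u1 u2 : R) : e1 ^+ 2 + e2 ^+ 2 != 0 ->
  u1 * e2 - u2 * e1 = 0 ->
  let t := (u1 * e1 + u2 * e2) / (e1 ^+ 2 + e2 ^+ 2) in u1 = t * e1 /\ u2 = t * e2.
Proof.
move=> s0 cross0 t; split; apply: (mulIf s0); rewrite /t mulrAC divfK //.
  by rewrite -[LHS]subr0 -(mulr0 e2) -cross0; ring.
by rewrite -[LHS]addr0 -(mulr0 e1) -cross0; ring.
Qed.

Lemma on_segmentP (a b z : P2) :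
  (exists t, 0 <= t <= 1 /\ z = (a.1 + t * (b.1 - a.1), a.2 + t * (b.2 - a.2)))
  <-> on_segment a b z.
Proof.
case: a b z => [a1 a2] [b1 b2] [z1 z2]; rewrite /on_segment /=.
set e1 := b1 - a1; set e2 := b2 - a2.
case: ifP => [/andP[/eqP-> /eqP->] | e_neq0].
  split=> [[t [_ [-> ->]]] | /andP[/eqP/subr0_eq-> /eqP/subr0_eq->]].
    by rewrite !mulr0 !addr0 !subrr eqxx.
  by exists 0; rewrite lexx ler01 !mul0r !addr0.
have s_gt0 : 0 < e1 ^+ 2 + e2 ^+ 2.
  rewrite lt_def paddr_eq0 ?sqr_ge0 // !sqrf_eq0 e_neq0 /=.
  by rewrite addr_ge0 ?sqr_ge0.
split=> [[t [/andP[t0 t1] [-> ->]]] | /and3P[/eqP cross0 dot0 dot1]].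
  have -> : (a1 + t * e1 - a1) * e1 + (a2 + t * e2 - a2) * e2
          = t * (e1 ^+ 2 + e2 ^+ 2) by ring.
  apply/and3P; split; first by apply/eqP; ring.
    by rewrite mulr_ge0 // ltW.
  by rewrite ler_piMl // ltW.
have [u1E u2E] := parallel_proj (lt0r_neq0 s_gt0) cross0.
exists (((z1 - a1) * e1 + (z2 - a2) * e2) / (e1 ^+ 2 + e2 ^+ 2)).
split; first by rewrite divr_ge0 ?ler_pdivrMr ?mul1r // ltW.
by rewrite -u1E -u2E !subrKC.
Qed.

End Segment.

Lemma odd_card_big_addb (I : finType) (P : pred I) :
  odd #|[set i | P i]| = \big[addb/false]_i P i.
Proof.
rewrite -sum1_card (big_morph odd oddD (erefl : odd 0 = false)) big_mkcond /=.
apply: eq_bigr => i _.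
by case: (boolP (P i)) => Pi; [rewrite mem_set | rewrite memNset //; apply/negP].
Qed.

Ltac measurable_arith := repeat first
  [ exact: measurable_cst | exact: measurable_fst | exact: measurable_snd
  | apply: measurable_funB | apply: measurable_funD | apply: measurable_funN
  | apply: measurable_funM | apply: measurable_funX ].

Section Region.
Variable R : realType.
Local Notation P2 := (R * R)%type.
Variables (N : nat) (vtx : 'I_N -> P2).

Lemma measurable_on_segment (a b : P2) : measurable_fun setT (on_segment a b).
Proof.
rewrite /on_segment /=; case: ((b.1 - a.1 == 0) && (b.2 - a.2 == 0)).
  by apply: measurable_and; apply: measurable_fun_eqr; measurable_arith.
apply: measurable_and; first by apply: measurable_fun_eqr; measurable_arith.
by apply: measurable_and; apply: measurable_fun_ler; measurable_arith.
Qed.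

Lemma measurable_crosses i : measurable_fun setT (fun z => crosses vtx z i).
Proof.
apply: measurable_and; last by apply: measurable_fun_ltr; measurable_arith.
by apply: (measurable_fun_bool_op (fun b c => b != c));
  apply: measurable_fun_ltr; measurable_arith.
Qed.

Lemma region_boolE : region vtx =
  [set z | ~~ (\big[orb/false]_i on_segment (vtx i) (vtx (ordS i)) z) &&
           \big[addb/false]_i crosses vtx z i].
Proof.
apply/seteqP; split=> z /=.
  move=> [not_bd odd_cross]; rewrite -odd_card_big_addb odd_cross andbT.
  apply: contra_notN not_bd; rewrite big_has => /hasP [i _ /on_segmentP [t ?]].
  by exists i, t.
move=> /andP[not_bd odd_cross]; split; last by rewrite odd_card_big_addb.
move=> [i [t [t01 zE]]]; move/negP: not_bd; apply; rewrite big_has.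
by apply/hasP; exists i; [exact: mem_index_enum | apply/on_segmentP; exists t].
Qed.

Lemma measurable_region : measurable (region vtx).
Proof.
have mregion : measurable_fun setT (fun z =>
    ~~ (\big[orb/false]_i on_segment (vtx i) (vtx (ordS i)) z) &&
    \big[addb/false]_i crosses vtx z i).
  apply: measurable_and; first apply: measurable_neg.
    by apply: measurable_fun_bigop => i; exact: measurable_on_segment.
  by apply: measurable_fun_bigop => i; exact: measurable_crosses.
by rewrite region_boolE -[X in measurable X]setTI; exact: mregion.
Qed.

End Region.

Section Subspace.
Variables (R : realType) (D : Type) (U : lmodType R) (S : set (D -> U)).
Hypothesis S_lin : lin_subspace S.

Lemma lin_subspaceB f g : S f -> S g -> S (f - g).
Proof.
move=> Sf Sg; rewrite (_ : f - g = fun z => -1 *: g z + f z).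
  exact: S_lin.2.
by apply/funext => z; rewrite scaleN1r addrC.
Qed.

End Subspace.

Section Complement.
Variable R : realType.
Local Notation P2 := (R * R)%type.
Variables (N : nat) (vtx : 'I_N -> P2).

Lemma perp_s0 (V Vt : set (P2 -> R)) : lin_subspace V -> perp_s vtx V Vt 0.
Proof.
move=> V_lin; split=> [|u _]; first exact: V_lin.1.
by apply: integral0_eq => z _; rewrite mul0r.
Qed.

Lemma perp_v0 (W Wt : set (P2 -> P2)) : lin_subspace W -> perp_v vtx W Wt 0.
Proof.
move=> W_lin; split=> [|u _]; first exact: W_lin.1.
by apply: integral0_eq => z _; rewrite /dot2 /= !mul0r addr0.
Qed.

Lemma perp_sB (V Vt : set (P2 -> R)) v v' :
  lin_subspace V -> (forall u, V u -> poly_fun u) -> Vt `<=` V ->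
  perp_s vtx V Vt v -> perp_s vtx V Vt v' -> perp_s vtx V Vt (v - v').
Proof.
move=> V_lin V_poly VtV [Vv v_perp] [Vv' v'_perp].
split=> [|u Vtu]; first exact: lin_subspaceB.
have mprod f : V f -> measurable_fun (region vtx) (fun z => f z * u z).
  move=> Vf; apply: (measurable_funS measurableT) => //.
  by apply: measurable_funM; apply: measurable_poly_fun; [exact: V_poly | 
    exact: V_poly (VtV _ Vtu)].
rewrite /L2s; under eq_integral do rewrite /= mulrBl.
by apply: integral_subr_eq0; [exact: measurable_region | exact: mprod ..
  | exact: v_perp | exact: v'_perp].
Qed.

Lemma perp_vB (W Wt : set (P2 -> P2)) w w' :
  lin_subspace W -> (forall u, W u -> vpoly_fun u) -> Wt `<=` W ->
  perp_v vtx W Wt w -> perp_v vtx W Wt w' -> perp_v vtx W Wt (w - w').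
Proof.
move=> W_lin W_poly WtW [Ww w_perp] [Ww' w'_perp].
split=> [|u Wtu]; first exact: lin_subspaceB.
have mdot f : W f -> measurable_fun (region vtx) (fun z => dot2 (f z) (u z)).
  move=> Wf; apply: (measurable_funS measurableT) => //.
  by apply: measurable_dot2; [exact: W_poly | exact: W_poly (WtW _ Wtu)].
rewrite /L2v; under eq_integral => z _.
  rewrite (_ : dot2 _ _ = dot2 (w z) (u z) - dot2 (w' z) (u z)); last first.
    by rewrite /dot2 /=; ring.
  over.
by apply: integral_subr_eq0; [exact: measurable_region | exact: mdot ..
  | exact: w_perp | exact: w'_perp].
Qed.

End Complement.

Section BoundaryTraces.
Variable R : realType.
Local Notation P2 := (R * R)%type.
Variables (N : nat) (vtx : 'I_N -> P2).

Lemma gamma_sB : {morph gamma_s vtx : v v' / v - v'}.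
Proof.
move=> v v'; apply/funext => p.
change (gamma_s vtx (v - v') p = gamma_s vtx v p - gamma_s vtx v' p).
rewrite /gamma_s /nx_s; set q := bpoint vtx p; case: (bnormal vtx p) => n1 n2.
change ((v - v') q) with (v q - v' q).
by apply/pair_equal_spec; split=> /=; ring.
Qed.

Lemma gamma_vB : {morph gamma_v vtx : w w' / w - w'}.
Proof.
move=> w w'; apply/funext => p.
change (gamma_v vtx (w - w') p = gamma_v vtx w p - gamma_v vtx w' p).
rewrite /gamma_v /nxwxn; set q := bpoint vtx p; case: (bnormal vtx p) => n1 n2.
change ((w - w') q) with (w q - w' q); case: (w q) => a1 a2; case: (w' q) => b1 b2.
by apply/pair_equal_spec; split=> /=; ring.
Qed.

End BoundaryTraces.

Theorem lemma5p1 (R : realType) (N : nat) (vtx : 'I_N -> (R * R)%type)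
  (V Vt : set ((R * R)%type -> R)) (W Wt : set ((R * R)%type -> (R * R)%type))
  (M : set ('I_N * bparam R -> (R * R)%type)) :
  (* K is a polygonal element *)
  polygonal_element vtx ->
  (* V(K), W(K): finite-dimensional spaces of polynomial (vector) functions *)
  lin_subspace V -> fin_dim V -> (forall v, V v -> poly_fun v) ->
  lin_subspace W -> fin_dim W -> (forall w, W w -> vpoly_fun w) ->
  (* M(dK): finite-dimensional space of vector functions on dK *)
  lin_subspace M -> fin_dim M ->
  (* Vt(K) subspace of V(K), Wt(K) subspace of W(K) *)
  lin_subspace Vt -> Vt `<=` V ->
  lin_subspace Wt -> Wt `<=` W ->
  (* n x V(K) in M(dK), n x W(K) x n in M(dK) *)
  (forall v, V v -> M (gamma_s vtx v)) ->
  (forall w, W w -> M (gamma_v vtx w)) ->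
  (* curl V(K) in Wt(K), curl W(K) in Vt(K) *)
  (forall v, V v -> Wt (curl_s v)) ->
  (forall w, W w -> Vt (curl_v w)) ->
  (* n x mu = 0 implies mu = 0 on M(dK) *)
  (forall mu, M mu -> (forall p, nx_v (bnormal vtx p) (mu p) = 0) -> mu = (fun=> 0)) ->
  (* tr : Vt^perp x Wt^perp -> M(dK) is an isomorphism *)
  ((forall v w v' w', perp_s vtx V Vt v -> perp_v vtx W Wt w ->
        perp_s vtx V Vt v' -> perp_v vtx W Wt w' ->
        trace vtx v w = trace vtx v' w' -> v = v' /\ w = w') /\
   (forall mu, M mu -> exists v w, perp_s vtx V Vt v /\ perp_v vtx W Wt w /\
        trace vtx v w = mu))
  <->
  (* gamma injective on Vt^perp *)
  ((forall v v', perp_s vtx V Vt v -> perp_s vtx V Vt v' ->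
        gamma_s vtx v = gamma_s vtx v' -> v = v') /\
  (* gamma injective on Wt^perp *)
   (forall w w', perp_v vtx W Wt w -> perp_v vtx W Wt w' ->
        gamma_v vtx w = gamma_v vtx w' -> w = w') /\
  (* gamma Vt^perp + gamma Wt^perp = M(dK), and the sum is direct *)
   (forall v w, perp_s vtx V Vt v -> perp_v vtx W Wt w ->
        gamma_s vtx v = gamma_v vtx w -> gamma_s vtx v = (fun=> 0)) /\
   (forall mu, M mu <-> exists v w, perp_s vtx V Vt v /\ perp_v vtx W Wt w /\
        mu = (fun p => gamma_s vtx v p + gamma_v vtx w p))).
Proof.
(* Only the inclusions of γV(K) and γW(K) in M(∂K) and the polynomiality of
   V(K) and W(K) are needed; the other hypotheses describe the setting. *)
move=> _ V_lin _ V_poly W_lin _ W_poly M_lin _ _ VtV _ WtW VM WM _ _ _.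
have MD m m' : M m -> M m' -> M (m + m').
  by move=> Mm Mm'; rewrite -[m]scale1r; exact: M_lin.2.
apply: (sum_map_bijective_iff (f := gamma_s vtx) (g := gamma_v vtx)).
- exact: perp_s0.
- exact: perp_v0.
- by move=> v v'; apply: perp_sB.
- by move=> w w'; apply: perp_vB.
- exact: gamma_sB.
- exact: gamma_vB.
- by move=> v [/VM].
- by move=> w [/WM].
- exact: MD.
Qed.
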